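(* For all $n>0$ and all lattice paths $P$ from $(0,0)$ to $(n,n)$ with unit north and east steps, $\mathrm{word}(\phi_{\mathrm{LW}}(P))=\mathrm{sw}^-_{1,-1}(\mathrm{word}(P))$.
   Context: Words over $\{\mathrm{N},\mathrm{E}\}$ are identified with lattice paths from $(0,0)$ (N = unit north step, E = unit east step); $\mathrm{word}(P)$ is the word of a path $P$, and $\mathrm{rev}$ reverses a word. The levels of a word $w=w_1\cdots w_n$ for $\mathrm{sw}^-_{1,-1}$ are $l_0=0$, $l_i=l_{i-1}+1$ if $w_i=\mathrm{N}$, $l_i=l_{i-1}-1$ if $w_i=\mathrm{E}$. $\mathrm{sw}^-_{1,-1}(w)$ is obtained by: for $k=-1,-2,\ldots$ and then $k=\ldots,2,1,0$ (all negative values in decreasing order, then all nonnegative values in decreasing order), scan $w$ from right to left and append each letter $w_i$ ($i\ge1$) with $l_i=k$. For a path $P$ from $(0,0)$ to $(n,n)$, its area vector is $g(P)=(g_0,\ldots,g_{n-1})$ where $g_i+n-i$ is the number of complete unit squares in the strip $\{(x,y):x\ge0,\ i\le y\le i+1\}$ lying to the right of $P$ and to the left of the line $x=n$. For each integer $i$, let $z^{(i)}$ be the subsequence of $g(P)$ consisting of all entries equal to $i$ or $i-1$, and let $\sigma^{(i)}$ be obtained by replacing each $i$ by $\mathrm{E}$ and each $i-1$ by $\mathrm{N}$. For $i\ge0$ let $\tau^{(i)}=\mathrm{rev}(\sigma^{(i)})$. For $i<0$, $\sigma^{(i)}$ (when nonempty) ends in $\mathrm{E}$; writing $\sigma^{(i)}=\tilde\sigma^{(i)}\mathrm{E}$,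 let $\tau^{(i)}=\mathrm{rev}(\tilde\sigma^{(i)})\mathrm{E}$ (and $\tau^{(i)}$ empty if $\sigma^{(i)}$ is empty). Then $\phi_{\mathrm{LW}}(P)$ is the path with word $\tau^{(-1)}\tau^{(-2)}\cdots\tau^{(-n)}\tau^{(n)}\cdots\tau^{(2)}\tau^{(1)}\tau^{(0)}$. *)

From HB Require Import structures.
From mathcomp Require Import all_boot all_order all_algebra.
Set Implicit Arguments. Unset Strict Implicit. Unset Printing Implicit Defensive.
Import Order.TTheory GRing.Theory Num.Theory.
Local Open Scope ring_scope.

(* Letters: N = unit north step, E = unit east step. *)
Inductive step := N | E.

Definition step_eqb (a b : step) : bool :=
  match a, b with N, N | E, E => true | _, _ => false end.
Lemma step_eqP : Equality.axiom step_eqb.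
Proof. by case; case; constructor. Qed.
HB.instance Definition _ := hasDecEq.Build step step_eqP.

(* A word over {N,E}; a lattice path from (0,0) is identified with its word,
   so word(P) = P.  A path ends at (n,n) iff it has n N's and n E's. *)
Definition word := seq step.

Definition level (w : word) (i : nat) : int :=
  (count_mem N (take i w))%:Z - (count_mem E (take i w))%:Z.

Definition sw_pass (w : word) (k : int) : word :=
  rev [seq nth N w i.-1 | i <- iota 1 (size w) & level w i == k].

(* k = -1, -2, ..., -|w| (all possible negative levels, decreasing),
   then k = |w|, ..., 1, 0 (all possible nonnegative levels, decreasing). *)
Definition sw_m11 (w : word) : word :=
  flatten [seq sw_pass w (- (j%:Z)) | j <- iota 1 (size w)] ++
  flatten [seq sw_pass w (j%:Z) | j <- rev (iota 0 (size w).+1)].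

(* x-coordinates of the north steps of a path, in order (e = current x). *)
Fixpoint north_xs (e : nat) (w : word) : seq nat :=
  match w with
  | [::] => [::]
  | N :: w' => e :: north_xs e w'
  | E :: w' => north_xs e.+1 w'
  end.

(* number of complete unit squares in the strip i <= y <= i+1 to the right
   of P and to the left of x = n: those with left side x >= x-coordinate of
   the north step of P in that strip. *)
Definition squares_right (n : nat) (w : word) (i : nat) : nat :=
  n - nth 0 (north_xs 0 w) i.

(* area vector g(P) = (g_0,...,g_{n-1}), g_i + (n - i) = squares_right i *)
Definition area_vector (n : nat) (w : word) : seq int :=
  [seq (squares_right n w i)%:Z - (n - i)%:Z | i <- iota 0 n].

Definition sigma_LW (g : seq int) (i : int) : word :=
  [seq (if x == i then E else N) | x <- g & (x == i) || (x == i - 1)].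

(* For i < 0, sigma = tilde_sigma E and tau = rev(tilde_sigma) E; we split off
   the last letter of sigma (which the paper asserts is E). *)
Definition tau_LW (g : seq int) (i : int) : word :=
  let s := sigma_LW g i in
  if 0 <= i then rev s
  else if s is [::] then [::]
  else rev (take (size s).-1 s) ++ [:: last N s].

Definition phi_LW (n : nat) (w : word) : word :=
  let g := area_vector n w in
  flatten [seq tau_LW g (- (j%:Z)) | j <- iota 1 n] ++
  flatten [seq tau_LW g (j%:Z) | j <- rev (iota 0 n.+1)].

From mathcomp Require Import all_boot all_order all_algebra zify.
Set Implicit Arguments. Unset Strict Implicit. Unset Printing Implicit Defensive.
Import Order.TTheory GRing.Theory Num.Theory.
Local Open Scope ring_scope.

(* Call #N - #E the height.  The area vector of P lists the heights at which
   its north steps start, so sigma^(k) lists, left to right, the north steps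
   leaving level k (as E) and those entering it from below (as N), while the
   letters of P at level k are the north steps entering level k and the east
   steps returning to it from above.  After a north step leaves level k the
   walk stays above k until the next east step back to k, so the two words
   agree up to one E shifted from the front to the back when the walk starts
   or ends above k.  As P starts and ends at height 0, sigma^(k) is the word
   of letters at level k for k >= 0, and for k < 0 its rotation moving the
   leading E to the end, which tau^(k) undoes; reversing yields the k-th
   block of sw^-_{1,-1}. *)

Definition rise (c : step) : int := if c is N then 1 else -1.

Fixpoint final_height (h : int) (w : word) : int :=
  if w is c :: w' then final_height (h + rise c) w' else h.

Fixpoint letters_at_level (k h : int) (w : word) : word :=
  if w is c :: w' then
    (if h + rise c == k then [:: c] else [::]) ++ letters_at_level k (h + rise c) w'
  else [::].

Fixpoint north_heights (h : int) (w : word) : seq int :=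
  match w with
  | [::] => [::]
  | N :: w' => h :: north_heights (h + 1) w'
  | E :: w' => north_heights (h - 1) w'
  end.

Lemma final_heightE (h : int) (w : word) :
  final_height h w = h + (count_mem N w)%:Z - (count_mem E w)%:Z.
Proof. by elim: w h => [|c w IH] h /=; [lia | rewrite IH; case: c => /=; lia]. Qed.

Lemma sigma_LW_cons (g : seq int) (x k : int) :
  sigma_LW (x :: g) k =
  (if x == k then [:: E] else if x == k - 1 then [:: N] else [::]) ++ sigma_LW g k.
Proof.
rewrite /sigma_LW /=; case xk: (x == k) => /=; first by rewrite xk.
by case: ifP => /= _; rewrite ?xk.
Qed.

Lemma sigma_LW_north_heights_crossing (k h : int) (w : word) :
  (if k < h then E :: sigma_LW (north_heights h w) k
   else sigma_LW (north_heights h w) k) =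
  (if k < final_height h w then rcons (letters_at_level k h w) E
   else letters_at_level k h w).
Proof.
elim: w h => [|c w IH] h /=; first by case: ltrP.
case: c => /=; rewrite ?sigma_LW_cons.
- have [->|hk] := eqVneq h k.
    rewrite ltxx (_ : (k + 1 == k) = false) /=; last by lia.
    by rewrite -IH ifT //; lia.
  have [->|hk1] := eqVneq h (k - 1).
    rewrite subrK eqxx /= -rcons_cons -fun_if -IH.
    by rewrite (_ : (k < k - 1) = false) ?ifF //; lia.
  rewrite (_ : (h + 1 == k) = false) /=; last by lia.
  by rewrite -IH (_ : (k < h) = (k < h + 1)) //; lia.
- have [hk|hk] := eqVneq (h - 1) k.
    by rewrite /= -rcons_cons -fun_if -IH hk ltxx ifT //; lia.
  by rewrite /= -IH (_ : (k < h) = (k < h - 1)) //; lia.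
Qed.

Lemma level0 (w : word) : level w 0 = 0.
Proof. by rewrite /level take0. Qed.

Lemma levelS (c : step) (w : word) (i : nat) :
  level (c :: w) i.+1 = rise c + level w i.
Proof. by rewrite /level /=; case: c => /=; lia. Qed.

Lemma letters_at_levelE (k h : int) (w : word) :
  letters_at_level k h w =
  [seq nth N w i.-1 | i <- iota 1 (size w) & h + level w i == k].
Proof.
elim: w h => [|c w IH] h //=.
rewrite levelS level0 addr0 (IH (h + rise c)) (iotaDl 1 1) filter_map.
have -> : [seq i <- iota 1 (size w)
            | preim (addn 1) (fun i => h + level (c :: w) i == k) i]
          = [seq i <- iota 1 (size w) | h + rise c + level w i == k].
  by apply: eq_filter => i /=; rewrite add1n levelS addrA.
set s := filter _ _.
have shift : [seq nth N (c :: w) i.-1 | i <- [seq (1 + i)%N | i <- s]]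
           = [seq nth N w i.-1 | i <- s].
  rewrite -map_comp; apply/eq_in_map => i.
  by rewrite mem_filter mem_iota => /andP[_ /andP[]]; case: i.
by case: ifP => _; rewrite /= shift.
Qed.

Lemma sw_passE (w : word) (k : int) : sw_pass w k = rev (letters_at_level k 0 w).
Proof. by rewrite letters_at_levelE /sw_pass; under [in RHS]eq_filter do rewrite add0r. Qed.

Lemma size_north_xs (e : nat) (w : word) : size (north_xs e w) = count_mem N w.
Proof. by elim: w e => [|c w IH] e //=; case: c => /=; rewrite IH. Qed.

Lemma north_xs_le (e x : nat) (w : word) :
  x \in north_xs e w -> (x <= e + count_mem E w)%N.
Proof.
elim: w e => [|c w IH] e //=; case: c => /=.
  by rewrite inE add0n => /orP[/eqP->|/IH] //; rewrite leq_addr.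
by move=> /IH; rewrite add1n addSnnS.
Qed.

Lemma north_heightsE (a e : nat) (w : word) :
  north_heights (a%:Z - e%:Z) w =
  [seq (a + i)%N%:Z - (nth 0 (north_xs e w) i)%:Z | i <- iota 0 (count_mem N w)].
Proof.
elim: w a e => [|c w IH] a e //=; case: c => /=.
  rewrite (_ : a%:Z - e%:Z + 1 = a.+1%:Z - e%:Z); last by lia.
  rewrite addn0 add0n IH (iotaDl 1 0) -map_comp; congr (_ :: _).
  by apply/eq_map => i /=; rewrite addSnnS.
by rewrite (_ : a%:Z - e%:Z - 1 = a%:Z - e.+1%:Z) ?IH //; lia.
Qed.

Lemma area_vectorE (n : nat) (w : word) :
  count_mem N w = n -> count_mem E w = n -> area_vector n w = north_heights 0 w.
Proof.
move=> wN wE; rewrite -(subrr 0%:Z) north_heightsE wN /area_vector.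
apply/eq_in_map => i; rewrite mem_iota => /andP[_ ltin].
have /north_xs_le : nth 0 (north_xs 0 w) i \in north_xs 0 w.
  by rewrite mem_nth // size_north_xs wN.
by rewrite /squares_right wE; lia.
Qed.

Lemma rev_rotate_last (T : Type) (x d : T) (s t : seq T) :
  x :: s = rcons t x ->
  (if s is [::] then [::] else rev (take (size s).-1 s) ++ [:: last d s]) = rev t.
Proof.
case/lastP: s => [|s y].
  by case: t => [|? []].
rewrite -rcons_cons => /rcons_inj[<- ->].
case Er: (rcons s x) => [|z u]; first by case: s Er.
by rewrite -Er size_rcons last_rcons -cats1 take_size_cat // rev_cons cats1.
Qed.

Lemma tau_LW_north_heights (k : int) (w : word) :
  final_height 0 w = 0 -> tau_LW (north_heights 0 w) k = rev (letters_at_level k 0 w).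
Proof.
move=> w0; have := sigma_LW_north_heights_crossing k 0 w.
rewrite w0 /tau_LW; case: lerP => _ /=; first by move->.
exact: rev_rotate_last.
Qed.

Lemma tau_LW_area_vector (n : nat) (w : word) (k : int) :
  count_mem N w = n -> count_mem E w = n -> tau_LW (area_vector n w) k = sw_pass w k.
Proof.
move=> wN wE; rewrite area_vectorE // sw_passE tau_LW_north_heights //.
by rewrite final_heightE wN wE; lia.
Qed.

Lemma sw_pass_out_of_range (w : word) (k : int) :
  ((count_mem N w)%:Z < k) || (k < - (count_mem E w)%:Z) -> sw_pass w k = [::].
Proof.
move=> k_out; rewrite /sw_pass (eq_filter (a2 := pred0)) ?filter_pred0 // => i /=.
apply/negbTE/eqP => wik; move: k_out; rewrite -wik /level.
have count_take_le c : (count_mem c (take i w) <= count_mem c w)%N.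
  exact: leq_count_subseq (take_subseq w i).
by have := count_take_le N; have := count_take_le E; lia.
Qed.

Lemma flatten_map_nil (S T : eqType) (f : S -> seq T) (s : seq S) :
  {in s, forall x, f x = [::]} -> flatten [seq f x | x <- s] = [::].
Proof.
elim: s => //= x s IH nil_s.
by rewrite nil_s ?mem_head ?IH // => y ys; apply: nil_s; rewrite in_cons ys orbT.
Qed.

Lemma size_word (w : word) : size w = (count_mem N w + count_mem E w)%N.
Proof. by elim: w => //= c w ->; case: c => /=; lia. Qed.

Theorem mainTheorem4 (n : nat) (P : word) :
  (0 < n)%N -> count_mem N P = n -> count_mem E P = n ->
  phi_LW n P = sw_m11 P.
Proof.
move=> _ PN PE.
have out_of_range k : (n%:Z < k) || (k < - n%:Z) -> sw_pass P k = [::].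
  by rewrite -{1}PN -PE; apply: sw_pass_out_of_range.
have no_low_levels : flatten [seq sw_pass P (- j%:Z) | j <- iota (1 + n) n] = [::].
  by apply: flatten_map_nil => j; rewrite mem_iota => j_range; apply: out_of_range; lia.
have no_high_levels : flatten [seq sw_pass P j%:Z | j <- rev (iota n.+1 n)] = [::].
  apply: flatten_map_nil => j; rewrite mem_rev mem_iota => j_range.
  by apply: out_of_range; lia.
rewrite /phi_LW /sw_m11 size_word PN PE iotaD -addSn iotaD rev_cat !map_cat.
rewrite !flatten_cat no_low_levels no_high_levels cats0 /=.
by congr (flatten _ ++ flatten _); apply: eq_map => k; apply: tau_LW_area_vector.
Qed.
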